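(* Let $E$ be a finite set and $\omega:2^E\to[0,\infty)$ not identically zero. Let $r$ and $s$ be the maximum and minimum cardinality of sets $S$ with $\omega(S)>0$, $\ell=r-s$, and let $y_1,\dots,y_\ell$ be indeterminates indexed by $\ell$ new elements $1,\dots,\ell$. Define $f_k(\omega)=\sum_{S\subseteq E,|S|=k}\omega(S)$ and $Z(\omega^\flat;\mathbf{y})=\sum_{S\subseteq E}\omega(S)\prod_{e\in S}y_e\; e_{r-|S|}(y_1,\dots,y_\ell)$, where $e_j$ is the $j$-th elementary symmetric function (and $e_j=0$ for $j<0$ or $j>\ell$). Then the sequence $(f_k(\omega): s\le k\le r)$ is logarithmically concave with no internal zeros if and only if the polynomial in $y_1,\dots,y_\ell$ obtained from $Z(\omega^\flat;\mathbf{y})$ by setting $y_e=1$ for all $e\in E$ is Rayleigh.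
   Context: A multiaffine polynomial $Z$ in indeterminates $\{y_c\}$ with nonnegative coefficients is Rayleigh if $\Delta Z\{i,j\}=Z_iZ_j-Z_{ij}Z\ge0$ (subscripts = partial derivatives) for all distinct indices $i,j$ and all positive values of the indeterminates. A nonnegative sequence $(a_k)$ is logarithmically concave if $a_k^2\ge a_{k-1}a_{k+1}$ for all interior $k$, and has no internal zeros if $i<j<k$ and $a_ia_k\ne0$ imply $a_j\ne0$. *)

From HB Require Import structures.
From mathcomp Require Import all_boot all_order all_algebra.
From mathcomp Require Import mpoly.
Set Implicit Arguments. Unset Strict Implicit. Unset Printing Implicit Defensive.
Import Order.TTheory GRing.Theory Num.Theory.
Local Open Scope ring_scope.

Definition multiaffine (R : ringType) (n : nat) (Z : {mpoly R[n]}) : Prop :=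
  forall m : 'X_{1..n}, m \in msupp Z -> forall i : 'I_n, (m i <= 1)%N.

Definition Rayleigh (R : realFieldType) (n : nat) (Z : {mpoly R[n]}) : Prop :=
  [/\ multiaffine Z,
      (forall m : 'X_{1..n}, 0 <= Z@_m) &
      forall (i j : 'I_n), i != j ->
      forall y : 'I_n -> R, (forall c, 0 < y c) ->
        0 <= (mderiv i Z).@[y] * (mderiv j Z).@[y]
             - (mderiv j (mderiv i Z)).@[y] * Z.@[y]].

Definition fk (R : realFieldType) (E : finType) (omega : {set E} -> R) (k : nat) : R :=
  \sum_(S : {set E} | #|S| == k) omega S.

Definition log_concave_on (R : realFieldType) (a : nat -> R) (s r : nat) : Prop :=
  forall k : nat, (s < k < r)%N -> a k.-1 * a k.+1 <= a k ^+ 2.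

Definition no_internal_zeros_on (R : realFieldType) (a : nat -> R) (s r : nat) : Prop :=
  forall i j k : nat, (s <= i)%N -> (i < j)%N -> (j < k)%N -> (k <= r)%N ->
    a i * a k != 0 -> a j != 0.

(* Z(omega^flat; y) with y_e = 1 for e in E: a polynomial in the ell = r - s
   new indeterminates y_1..y_ell:  sum_S omega(S) e_{r-|S|}(y_1..y_ell),
   with e_j = 0 for j < 0 (i.e. |S| > r) and for j > ell (automatic for mesym). *)
Definition Zflat_spec (R : realFieldType) (E : finType) (omega : {set E} -> R)
    (r ell : nat) : {mpoly R[ell]} :=
  \sum_(S : {set E}) (if (#|S| <= r)%N then omega S *: mesym ell R (r - #|S|) else 0).

(* With a_j := f_(r-j), the specialised polynomial is Z = sum_(h in 2^[l]) a_|h| y^h.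
   For i <> j and V := [l] \ {i, j}, put Psi_m(y) := sum_(g in 2^V) a_(|g|+m) y^g;
   then Z_i Z_j - Z_ij Z = Psi_1^2 - Psi_0 Psi_2.  Adjoining one variable y_x to V
   replaces the coefficient sequence b by (b_m + y_x b_(m+1))_m, which preserves
   being nonnegative, log-concave and without internal zeros; by induction on |V|
   such an (a_j) makes Z Rayleigh.
   Conversely, evaluate at y = 1/t on P, 1 on F and t elsewhere in V (P, F disjoint):
   as t -> 0, t^|P| Psi_m tends to sum_(P <= g <= P u F) a_(|g|+m).  With F empty this
   gives a_p a_(p+2) <= a_(p+1)^2, and with |F| = f over a run of zeros
   a_(p+1) = ... = a_(p+f+1) = 0 it gives a_p a_(p+f+2) <= 0: no internal zeros. *)

From HB Require Import structures.
From mathcomp Require Import all_boot all_order all_algebra.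
From mathcomp Require Import mpoly.
From mathcomp Require Import reals.
From mathcomp Require Import ring lra zify.
Import Order.TTheory GRing.Theory Num.Theory.
Local Open Scope ring_scope.
Set Implicit Arguments. Unset Strict Implicit. Unset Printing Implicit Defensive.

Lemma big_mem_setU1 (V : nmodType) (T : finType) (t : T) (P : pred {set T})
    (F : {set T} -> V) :
  \sum_(g : {set T} | (t \in g) && P g) F g
  = \sum_(g : {set T} | (t \notin g) && P (t |: g)) F (t |: g).
Proof.
rewrite (reindex_onto (fun g => t |: g) (fun g => g :\ t)) /=; last first.
  by move=> g /andP[tg _]; rewrite setD1K.
apply: eq_bigl => g; rewrite setU11 /=.
case tg: (t \in g) => /=; last by rewrite setU1K ?tg // eqxx andbT.
rewrite andbC; apply/negP => /andP[/eqP gE _].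
by move: (setD11 t (t |: g)); rewrite gE tg.
Qed.

Lemma exists_subset_card (T : finType) (U : {set T}) k : (k <= #|U|)%N ->
  exists2 P : {set T}, P \subset U & #|P| = k.
Proof.
elim: k => [|k IH] kU; first by exists set0; rewrite ?sub0set ?cards0.
have [P PU Pk] := IH (ltnW kU).
have /subsetPn [x xU xP] : ~~ (U \subset P).
  by apply: contraTN kU => /subset_leq_card; rewrite Pk -leqNgt.
by exists (x |: P); rewrite ?subUset ?sub1set ?xU ?PU // cardsU1 xP Pk.
Qed.

Lemma cards_setTD2 n (i j : 'I_n) : i != j -> #|setT :\ i :\ j| = (n - 2)%N.
Proof.
move=> ij; have := cardsD1 i setT; have := cardsD1 j (setT :\ i).
by rewrite cardsT card_ord !inE eq_sym ij /=; lia.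
Qed.

Lemma prodr_le_factor (R : numDomainType) (I : finType) (A : {pred I}) (f : I -> R)
    t k : k \in A ->
  (forall i, i \in A -> 0 <= f i <= 1) -> f k <= t -> \prod_(i in A) f i <= t.
Proof.
move=> kA f01 fk; rewrite (bigD1 k) //= -[t]mulr1.
have [fk0 _] := andP (f01 k kA).
apply: ler_pM => //; first by apply: prodr_ge0 => i /andP[/f01/andP[]].
by apply: prodr_ile1 => i /andP[/f01].
Qed.

Lemma ler_sqr_of_ler_sqrD (R : realFieldType) (Q B K : R) : 0 <= B -> 0 <= K ->
  (forall t, 0 < t <= 1 -> Q <= (B + t * K) ^+ 2) -> Q <= B ^+ 2.
Proof.
move=> B0 K0 QB; apply/ler_addgt0Pr => e e0.
(* (B + t K)^2 <= B^2 + t M, and t := e / (e + M) makes t M <= e. *)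
pose M := 2 * B * K + K ^+ 2.
have M0 : 0 <= M by rewrite addr_ge0 ?mulr_ge0 ?exprn_ge0.
pose t := e / (e + M).
have eM0 : 0 < e + M by rewrite ltr_wpDr.
have t0 : 0 < t by rewrite divr_gt0.
have teM : t * (e + M) = e by rewrite mulfVK ?gt_eqF.
have t1 : t <= 1 by rewrite -(ler_pM2r eM0) mul1r teM lerDl.
apply: le_trans (QB t _) _; first by rewrite t0 t1.
have tK := ler_piMr (mulr_ge0 (ltW t0) (sqr_ge0 K)) t1.
have tM : t * M <= e.
  by rewrite -[X in _ <= X]teM ler_wpM2l ?lerDr ?ltW.
have -> : (B + t * K) ^+ 2 = B ^+ 2 + t * (2 * B * K) + t * K ^+ 2 * t by ring.
by rewrite /M in tM; lra.
Qed.

Section SetPoly.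
Variables (R : comNzRingType) (n : nat).
Implicit Types (c : {set 'I_n} -> R) (y : 'I_n -> R) (U : {set 'I_n}).

Definition msetpoly c : {mpoly R[n]} := \sum_(h : {set 'I_n}) c h *: 'X_[mesym1 h].

Lemma eq_msetpoly c c' : c =1 c' -> msetpoly c = msetpoly c'.
Proof. by move=> cc'; apply: eq_bigr => h _; rewrite cc'. Qed.

Lemma mcoeff_msetpoly c m : (msetpoly c)@_m = \sum_h c h * (mesym1 h == m)%:R.
Proof.
rewrite /msetpoly raddf_sum; apply: eq_bigr => h _.
by rewrite -[LHS]/(mcoeff m _) mcoeffZ mcoeffX.
Qed.

Lemma meval_msetpoly c y : (msetpoly c).@[y] = \sum_h c h * \prod_(k in h) y k.
Proof.
rewrite /msetpoly raddf_sum; apply: eq_bigr => h _.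
rewrite -[LHS]/(meval y _) mevalZ mevalX; congr (_ * _).
by rewrite [RHS]big_mkcond; apply: eq_bigr => k _; rewrite mnmE; case: (k \in h).
Qed.

Lemma mderiv_msetpoly c x :
  mderiv x (msetpoly c) = msetpoly (fun g => if x \in g then 0 else c (x |: g)).
Proof.
rewrite /msetpoly raddf_sum (bigID (fun h : {set 'I_n} => x \in h)) /=.
rewrite [X in _ + X]big1 ?addr0; last first.
  by move=> h /negbTE xh; rewrite mderivZ mderivX mnmE xh scale0r scaler0.
rewrite [RHS](bigID (fun h : {set 'I_n} => x \in h)) /=.
rewrite [X in X + _]big1 ?add0r; last first.
  by move=> h ->; rewrite scale0r.
rewrite -(eq_bigl _ _ (fun h : {set 'I_n} => andbT (x \in h))) big_mem_setU1.
apply: eq_big => [h|h /andP[xh _]]; first by rewrite andbT.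
rewrite (negbTE xh) mderivZ mderivX mnmE setU11 scalerA mulr1.
congr (_ *: 'X_[_]); apply/mnmP => k.
rewrite mnmBE !mnmE in_setU1.
by case: (eqVneq x k) => [<-|_] /=; rewrite ?(negbTE xh) ?subn0.
Qed.

Lemma msetpoly_multiaffine c : multiaffine (msetpoly c).
Proof.
move=> m; rewrite mcoeff_msupp mcoeff_msetpoly => nz i.
case: (pickP (fun h => mesym1 h == m)) => [h /eqP <- | none].
  by rewrite mnmE; case: (i \in h).
by move: nz; rewrite big1 ?eqxx // => h _; rewrite none mulr0.
Qed.

Variable a : nat -> R.

(* sum_k a_(k+m) e_k(y_u : u in U) *)
Definition esym_comb U (m : nat) : {mpoly R[n]} :=
  msetpoly (fun g => if g \subset U then a (#|g| + m) else 0).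

Definition esym_val y U (m : nat) : R :=
  \sum_(g : {set 'I_n} | g \subset U) a (#|g| + m) * \prod_(k in g) y k.

Lemma meval_esym_comb y U m : (esym_comb U m).@[y] = esym_val y U m.
Proof.
rewrite meval_msetpoly /esym_val [RHS]big_mkcond; apply: eq_bigr => g _.
by case: (g \subset U); rewrite ?mul0r.
Qed.

Lemma mderiv_esym_comb U m x :
  x \in U -> mderiv x (esym_comb U m) = esym_comb (U :\ x) m.+1.
Proof.
move=> xU; rewrite mderiv_msetpoly; apply: eq_msetpoly => g.
rewrite subsetD1; case xg: (x \in g); first by rewrite andbF.
by rewrite andbT subUset sub1set xU cardsU1 xg add1n addSnnS.
Qed.

Lemma esym_val_set0 y m : esym_val y set0 m = a m.
Proof.
rewrite /esym_val (big_pred1 set0) ?cards0 ?big_set0 ?mulr1 //.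
by move=> g; rewrite subset0.
Qed.

Lemma esym_valD1 y U m x : x \in U ->
  esym_val y U m = esym_val y (U :\ x) m + y x * esym_val y (U :\ x) m.+1.
Proof.
move=> xU; rewrite /esym_val (bigID (fun g : {set 'I_n} => x \in g)) /= addrC.
congr (_ + _); first by apply: eq_bigl => g; rewrite subsetD1.
rewrite (eq_bigl _ _ (fun g : {set 'I_n} => andbC (g \subset U) (x \in g))).
rewrite big_mem_setU1.
rewrite mulr_sumr; apply: eq_big => [g|g /andP[xg _]].
  by rewrite subUset sub1set xU subsetD1 andbC.
by rewrite cardsU1 xg add1n addSnnS big_setU1 //= mulrCA.
Qed.

Lemma rayleigh_diff_esym_comb (i j : 'I_n) y : i != j ->
  let Z := esym_comb setT 0 in let V := setT :\ i :\ j in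
  (mderiv i Z).@[y] * (mderiv j Z).@[y] - (mderiv j (mderiv i Z)).@[y] * Z.@[y]
  = esym_val y V 1 ^+ 2 - esym_val y V 0 * esym_val y V 2.
Proof.
move=> ij Z V.
have jTi : j \in setT :\ i by rewrite in_setD1 eq_sym ij in_setT.
have iTj : i \in setT :\ j by rewrite in_setD1 ij in_setT.
have VE : setT :\ j :\ i = V by apply/setP => k; rewrite !in_setD1 andbCA.
rewrite /Z !mderiv_esym_comb ?in_setT // !meval_esym_comb.
rewrite (@esym_valD1 _ setT 0 i) ?in_setT // (esym_valD1 _ 0 jTi).
rewrite (esym_valD1 _ 1 jTi) (esym_valD1 _ 1 iTj) VE.
ring.
Qed.

End SetPoly.

Lemma msetpoly_mcoeff_ge0 (R : numDomainType) n (c : {set 'I_n} -> R) :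
  (forall h, 0 <= c h) -> forall m, 0 <= (msetpoly c)@_m.
Proof.
by move=> c0 m; rewrite mcoeff_msetpoly sumr_ge0 // => h _; rewrite mulr_ge0.
Qed.

Section PF2.
Variable R : realFieldType.
Implicit Types (b : nat -> R).

Definition pf2_seq b :=
  [/\ forall n, 0 <= b n, forall n, b n * b n.+2 <= b n.+1 ^+ 2 &
      forall i j k, (i < j < k)%N -> 0 < b i -> 0 < b k -> 0 < b j].

Lemma eq_pf2_seq b b' : b =1 b' -> pf2_seq b -> pf2_seq b'.
Proof.
move=> bb' [b0 lc niz]; split=> [k|k|i j k]; rewrite -!bb' //; exact: niz.
Qed.

Lemma pf2_seq_cross b n : pf2_seq b -> b n * b n.+3 <= b n.+1 * b n.+2.
Proof.
case=> b0 lc niz.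
have [->|bn] := eqVneq (b n) 0; first by rewrite mul0r mulr_ge0.
have [->|b3] := eqVneq (b n.+3) 0; first by rewrite mulr0 mulr_ge0.
have [bn' b3'] : 0 < b n /\ 0 < b n.+3 by rewrite !lt_def bn b3 !b0.
have b1 : 0 < b n.+1 by apply: (niz n n.+1 n.+3) => //; lia.
have b2 : 0 < b n.+2 by apply: (niz n n.+2 n.+3) => //; lia.
have b12 : 0 < b n.+1 * b n.+2 by rewrite mulr_gt0.
rewrite -(ler_pM2r b12).
have : (b n * b n.+2) * (b n.+1 * b n.+3) <= b n.+1 ^+ 2 * b n.+2 ^+ 2.
  by apply: ler_pM; rewrite ?mulr_ge0 ?lc.
by rewrite !expr2; nra.
Qed.

Lemma pf2_seq_shift b w : pf2_seq b -> 0 < w -> pf2_seq (fun n => b n + w * b n.+1).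
Proof.
move=> pf2b w0; have [b0 lc niz] := pf2b.
have bw0 k : 0 <= b k + w * b k.+1 by rewrite addr_ge0 // mulr_ge0 // ltW.
split=> // [n|i j k /andP[ij jk] bwi bwk].
  rewrite -subr_ge0.
  have -> : (b n.+1 + w * b n.+2) ^+ 2 - (b n + w * b n.+1) * (b n.+2 + w * b n.+3)
    = (b n.+1 ^+ 2 - b n * b n.+2) + w * (b n.+1 * b n.+2 - b n * b n.+3)
      + w ^+ 2 * (b n.+2 ^+ 2 - b n.+1 * b n.+3) by ring.
  have cross : 0 <= b n.+1 * b n.+2 - b n * b n.+3 by rewrite subr_ge0 pf2_seq_cross.
  have lc0 : 0 <= b n.+1 ^+ 2 - b n * b n.+2 by rewrite subr_ge0.
  have lc1 : 0 <= b n.+2 ^+ 2 - b n.+1 * b n.+3 by rewrite subr_ge0.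
  have w0' := ltW w0.
  by apply: addr_ge0; [apply: addr_ge0 | ]; rewrite // mulr_ge0 // exprn_ge0.
have pos_pair x : 0 < b x + w * b x.+1 -> 0 < b x \/ 0 < b x.+1.
  move=> bwx; case: (ltrP 0 (b x)) => [bx | bx0]; [by left | right].
  have bx : b x = 0 by apply/eqP; rewrite eq_le bx0 b0.
  by move: bwx; rewrite bx add0r pmulr_rgt0.
apply: lt_le_trans (_ : b j <= _); last by rewrite lerDl mulr_ge0 // ltW.
have [x [xj bx]] : exists x, (x <= j)%N /\ 0 < b x.
  by case: (pos_pair i bwi) => ?; [exists i; rewrite (ltnW ij) | exists i.+1].
have [z [jz bz]] : exists z, (j < z)%N /\ 0 < b z.
  by case: (pos_pair k bwk) => ?; [exists k | exists k.+1; rewrite ltnS (ltnW jk)].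
have [<- //|xj'] := eqVneq x j.
by apply: (niz x j z); rewrite // ltn_neqAle xj' xj.
Qed.

Lemma pf2_seq_gaps b : (forall n, 0 <= b n) ->
  (forall p q, (p.+1 < q)%N -> (forall k, (p < k < q)%N -> b k = 0) -> b p * b q <= 0) ->
  forall i j k, (i < j < k)%N -> 0 < b i -> 0 < b k -> 0 < b j.
Proof.
move=> b0 gaps i j k /andP[ij jk] bi bk.
rewrite lt_def b0 andbT; apply/negP => /eqP bj.
have exP : exists x, (x <= j)%N && (0 < b x) by exists i; rewrite ltnW.
have ubP x : (x <= j)%N && (0 < b x) -> (x <= j)%N by case/andP.
case: (ex_maxnP exP ubP) => p /andP[pj bp] pmax.
have exQ : exists x, (j <= x)%N && (0 < b x) by exists k; rewrite ltnW.
case: (ex_minnP exQ) => q /andP[jq bq] qmin.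
have zero x : (p < x < q)%N -> b x = 0.
  case/andP=> px xq; apply/eqP; rewrite eq_le b0 andbT leNgt; apply/negP => bx.
  have [xj|jx] := leqP x j.
    by have := pmax x; rewrite xj bx => /(_ isT); lia.
  by have := qmin x; rewrite ltnW // bx => /(_ isT); lia.
have pj' : p != j by apply: contraTneq bp => ->; rewrite bj ltxx.
have jq' : j != q by apply: contraTneq bq => <-; rewrite bj ltxx.
have := gaps p q ltac:(lia) zero.
by rewrite leNgt mulr_gt0.
Qed.

Lemma pf2_seq_on b ell : (forall n, 0 <= b n) -> (forall n, (ell < n)%N -> b n = 0) ->
  pf2_seq b <-> log_concave_on b 0 ell /\ no_internal_zeros_on b 0 ell.
Proof.
move=> b0 b_ell; split.
  case=> _ lc niz; split=> [[|k] //= _ | i j k _ ij jk _].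
  rewrite mulf_eq0 negb_or => /andP[bi bk].
  by rewrite gt_eqF // (niz i j k) ?ij ?jk // lt_def ?bi ?bk b0.
case=> lc niz; split=> // [k | i j k /andP[ij jk] bi bk].
  have [kl|lk] := ltnP k.+1 ell; first exact: (lc k.+1).
  by rewrite (b_ell k.+2) ?mulr0 ?sqr_ge0.
have kl : (k <= ell)%N by rewrite leqNgt; apply: contraTN bk => /b_ell ->; rewrite ltxx.
rewrite lt_def b0 andbT (niz i j k) //.
by rewrite mulf_neq0 // gt_eqF.
Qed.

Definition rev_seq b r j : R := if (j <= r)%N then b (r - j)%N else 0.

Lemma rev_seqE b r j : (j <= r)%N -> rev_seq b r j = b (r - j)%N.
Proof. by rewrite /rev_seq => ->. Qed.

Lemma log_concave_on_rev b s r : (s <= r)%N ->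
  log_concave_on b s r <-> log_concave_on (rev_seq b r) 0 (r - s).
Proof.
move=> sr; split=> lc k /andP[k0 kr].
  rewrite !rev_seqE; try lia.
  rewrite (_ : r - k.-1 = (r - k).+1)%N; last lia.
  rewrite (_ : r - k.+1 = (r - k).-1)%N; last lia.
  by rewrite mulrC; apply: lc; lia.
have := lc (r - k)%N ltac:(lia); rewrite !rev_seqE; try lia.
rewrite (_ : r - (r - k).-1 = k.+1)%N; last lia.
rewrite (_ : r - (r - k).+1 = k.-1)%N; last lia.
by rewrite subKn 1?mulrC //; lia.
Qed.

Lemma no_internal_zeros_on_rev b s r : (s <= r)%N ->
  no_internal_zeros_on b s r <-> no_internal_zeros_on (rev_seq b r) 0 (r - s).
Proof.
move=> sr; split=> niz i j k si ij jk kr.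
  by rewrite !rev_seqE 1?mulrC; try lia; apply: niz; lia.
have := niz (r - k)%N (r - j)%N (r - i)%N ltac:(lia) ltac:(lia) ltac:(lia) ltac:(lia).
by rewrite !rev_seqE ?subKn 1?mulrC //; lia.
Qed.

End PF2.

Lemma pf2_esym_val (R : realFieldType) n (a : nat -> R) (y : 'I_n -> R) U :
  pf2_seq a -> (forall k, 0 < y k) -> pf2_seq (esym_val a y U).
Proof.
move=> pf2a y0; elim: {U}#|U| {-2}U (erefl #|U|) => [|N IH] U UN.
  move/eqP: UN; rewrite cards_eq0 => /eqP ->.
  by apply: eq_pf2_seq pf2a => m; rewrite esym_val_set0.
have /set0Pn [x xU] : U != set0 by rewrite -card_gt0 UN.
pose b m := esym_val a y (U :\ x) m.
apply: (@eq_pf2_seq _ (fun m => b m + y x * b m.+1)).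
  by move=> m; rewrite -esym_valD1.
apply: pf2_seq_shift => //; apply: IH.
by move: UN; rewrite (cardsD1 x U) xU add1n => -[].
Qed.

Section Probe.
Variables (R : realFieldType) (n : nat).
Implicit Types (t : R) (P F g U : {set 'I_n}).

Definition probe t P F (k : 'I_n) : R :=
  if k \in P then t^-1 else if k \in F then 1 else t.

Definition probe_weight t P F g : R := t ^+ #|P| * \prod_(k in g) probe t P F k.

Lemma probe_weightE t P F g : t != 0 ->
  probe_weight t P F g = \prod_(k in P :\: g) t * \prod_(k in g :\: P) probe t P F k.
Proof.
move=> t0; rewrite /probe_weight -(prodr_const (mem P)).
rewrite (big_setID g) (big_setID P (A := g)) /= mulrACA setIC -big_split /=.
by rewrite big1 ?mul1r // => k; rewrite in_setI => /andP[_ kP]; rewrite /probe kP mulfV.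
Qed.

Lemma probe_gt0 t P F k : 0 < t -> 0 < probe t P F k.
Proof.
by move=> t0; rewrite /probe; case: (k \in P); case: (k \in F); rewrite ?invr_gt0.
Qed.

Lemma probe_weight_ge0 t P F g : 0 < t -> 0 <= probe_weight t P F g.
Proof.
move=> t0; rewrite /probe_weight mulr_ge0 ?exprn_ge0 ?ltW //.
by apply: prodr_gt0 => k _; apply: probe_gt0.
Qed.

Lemma probe_weight_interval t P F g : t != 0 -> P \subset g -> g \subset P :|: F ->
  probe_weight t P F g = 1.
Proof.
move=> t0 Pg gPF; have PgE : P :\: g = set0 by apply/eqP; rewrite setD_eq0.
rewrite probe_weightE // PgE big_set0 mul1r.
apply: big1 => k; rewrite in_setD /probe => /andP[/negbTE kP kg].
by move/subsetP: gPF => /(_ k kg); rewrite in_setU kP /= => ->.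
Qed.

Lemma probe_weight_out t P F g : 0 < t <= 1 ->
  ~~ ((P \subset g) && (g \subset P :|: F)) -> probe_weight t P F g <= t.
Proof.
case/andP=> t0 t1; rewrite probe_weightE ?gt_eqF //.
have t01 : 0 <= t <= 1 by rewrite ltW.
have probe01 k : k \in g :\: P -> 0 <= probe t P F k <= 1.
  rewrite in_setD /probe => /andP[/negbTE -> _].
  by case: (k \in F); rewrite ?ler01 ?lexx.
have [p10 p11] : 0 <= \prod_(k in P :\: g) t /\ \prod_(k in P :\: g) t <= 1.
  by rewrite prodr_ge0 ?prodr_ile1 // => *; rewrite ltW.
have [p20 p21] : 0 <= \prod_(k in g :\: P) probe t P F k /\
                 \prod_(k in g :\: P) probe t P F k <= 1.
  by rewrite prodr_ile1 // prodr_ge0 // => k /probe01 /andP[].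
rewrite negb_and => /orP[/subsetPn [k kP kg] | /subsetPn [k kg kPF]].
  apply: le_trans (ler_piMr p10 p21) _.
  by apply: (prodr_le_factor (k := k)); rewrite ?in_setD ?kg ?kP.
apply: le_trans (ler_piMl p20 p11) _.
move: kPF; rewrite in_setU negb_or => /andP[kP kF].
apply: (prodr_le_factor (k := k)) => //; first by rewrite in_setD kg kP.
by rewrite /probe (negbTE kP) (negbTE kF).
Qed.

Variable a : nat -> R.
Hypothesis a0 : forall k, 0 <= a k.

Definition interval_sum P F (m : nat) : R :=
  \sum_(g : {set 'I_n} | (P \subset g) && (g \subset P :|: F)) a (#|g| + m).

Lemma esym_val_probe_bounds U P F m t : P :|: F \subset U -> 0 < t <= 1 ->
  interval_sum P F m <= t ^+ #|P| * esym_val a (probe t P F) U m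
    <= interval_sum P F m + t * \sum_(g : {set 'I_n} | g \subset U) a (#|g| + m).
Proof.
move=> PFU t01; have /andP[t0 t1] := t01.
set I := fun g : {set 'I_n} => (P \subset g) && (g \subset P :|: F).
rewrite /esym_val mulr_sumr.
under eq_bigr => g _ do rewrite mulrCA -/(probe_weight t P F g).
rewrite (bigID I) /=.
have -> : \sum_(g : {set 'I_n} | (g \subset U) && I g) a (#|g| + m) * probe_weight t P F g
          = interval_sum P F m.
  apply: eq_big => [g|g /andP[_ /andP[Pg gPF]]]; last first.
    by rewrite probe_weight_interval ?gt_eqF ?mulr1.
  by apply: andb_idl => /andP[_ gPF]; exact: subset_trans gPF PFU.
set out := \sum_(g | _ && ~~ _) _.
have out0 : 0 <= out by apply: sumr_ge0 => g _; rewrite mulr_ge0 ?probe_weight_ge0.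
have outK : out <= t * \sum_(g : {set 'I_n} | g \subset U) a (#|g| + m).
  rewrite mulr_sumr (bigID I) /= -[out]add0r.
  apply: lerD; first by apply: sumr_ge0 => g _; rewrite mulr_ge0 // ltW.
  apply: ler_sum => g /andP[_ gI]; rewrite mulrC ler_wpM2r //.
  exact: probe_weight_out.
by rewrite lerDl out0 lerD2l outK.
Qed.

Lemma interval_sum_lc U P F : P :|: F \subset U ->
  (forall y, (forall k, 0 < y k) ->
     esym_val a y U 0 * esym_val a y U 2 <= esym_val a y U 1 ^+ 2) ->
  interval_sum P F 0 * interval_sum P F 2 <= interval_sum P F 1 ^+ 2.
Proof.
move=> PFU lcU.
have I0 m : 0 <= interval_sum P F m by apply: sumr_ge0.
pose K := \sum_(g : {set 'I_n} | g \subset U) a (#|g| + 1).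
apply: (@ler_sqr_of_ler_sqrD _ _ _ K) => //; first exact: sumr_ge0.
move=> t t01; have /andP[t0 _] := t01.
have /andP[lb0 _] := esym_val_probe_bounds 0 PFU t01.
have /andP[lb2 _] := esym_val_probe_bounds 2 PFU t01.
have /andP[lb1 ub1] := esym_val_probe_bounds 1 PFU t01.
pose c := t ^+ #|P|; pose y := probe t P F.
have lcy : (c * esym_val a y U 0) * (c * esym_val a y U 2) <= (c * esym_val a y U 1) ^+ 2.
  rewrite mulrACA exprMn -expr2 ler_pM2l ?exprn_gt0 //.
  by apply: lcU => k; apply: probe_gt0.
apply: le_trans (ler_pM (I0 0%N) (I0 2%N) lb0 lb2) (le_trans lcy _).
have y1 := le_trans (I0 1%N) lb1.
by apply: lerXn2r; rewrite ?nnegrE //; exact: le_trans y1 ub1.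
Qed.

End Probe.

Section EsymValLC.
Variables (R : realFieldType) (n : nat) (a : nat -> R) (U : {set 'I_n}).
Hypothesis a0 : forall k, 0 <= a k.
Hypothesis lcU : forall y, (forall k, 0 < y k) ->
  esym_val a y U 0 * esym_val a y U 2 <= esym_val a y U 1 ^+ 2.

Lemma lc_of_esym_val_lc p : (p <= #|U|)%N -> a p * a p.+2 <= a p.+1 ^+ 2.
Proof.
move=> pU; have [P PU <-] := exists_subset_card pU.
have PU0 : P :|: set0 \subset U by rewrite setU0.
have intP m : interval_sum a P set0 m = a (#|P| + m).
  rewrite /interval_sum (big_pred1 P) // => g /=.
  by rewrite setU0 -eqEsubset eq_sym.
by have := interval_sum_lc a0 PU0 lcU; rewrite !intP addn0 addn1 addn2.
Qed.

Lemma gap_of_esym_val_lc p q : (p.+1 < q <= #|U|.+2)%N ->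
  (forall k, (p < k < q)%N -> a k = 0) -> a p * a q <= 0.
Proof.
case/andP=> pq qU gap.
have [P PU Pp] : exists2 P : {set 'I_n}, P \subset U & #|P| = p.
  by apply: exists_subset_card; rewrite -2!ltnS (leq_trans pq qU).
have [F FUP Ff] : exists2 F : {set 'I_n}, F \subset U :\: P & #|F| = (q - p - 2)%N.
  by apply: exists_subset_card; rewrite cardsD (setIidPr PU) Pp; lia.
have PF0 : [disjoint P & F].
  rewrite -setI_eq0 -subset0; apply/subsetP => x /setIP[xP /(subsetP FUP)].
  by rewrite inE xP.
have PFU : P :|: F \subset U by rewrite subUset PU (subset_trans FUP) ?subsetDl.
have cardPF : #|P :|: F| = (q - 2)%N by rewrite cardsU (disjoint_setI0 PF0) cards0; lia.
have I1 : interval_sum a P F 1 = 0.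
  apply: big1 => g /andP[Pg gPF]; apply: gap.
  by have := subset_leq_card Pg; have := subset_leq_card gPF; lia.
have I_ge m (g : {set 'I_n}) : P \subset g -> g \subset P :|: F ->
    a (#|g| + m) <= interval_sum a P F m.
  move=> Pg gPF; rewrite /interval_sum (bigD1 g) ?Pg //= lerDl.
  by apply: sumr_ge0.
have := interval_sum_lc a0 PFU lcU; rewrite I1 expr0n /=.
apply: le_trans; apply: ler_pM => //.
- by move: (I_ge 0%N P (subxx P) (subsetUl P F)); rewrite addn0 Pp.
- move: (I_ge 2%N (P :|: F) (subsetUl P F) (subxx _)).
  by rewrite cardPF (_ : q - 2 + 2 = q)%N //; lia.
Qed.

Lemma pf2_of_esym_val_lc : (forall k, (#|U|.+2 < k)%N -> a k = 0) -> pf2_seq a.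
Proof.
move=> a_U; split=> // [p|].
  have [pU|Up] := leqP p #|U|; first exact: lc_of_esym_val_lc.
  by rewrite (a_U p.+2) ?mulr0 ?sqr_ge0.
apply: pf2_seq_gaps => // p q pq gap.
have [qU|Uq] := leqP q #|U|.+2; last by rewrite (a_U q) ?mulr0.
by apply: gap_of_esym_val_lc; rewrite ?pq.
Qed.

End EsymValLC.

Lemma esym_comb_RayleighP (R : realFieldType) n (a : nat -> R) :
  (forall k, 0 <= a k) -> (forall k, (n < k)%N -> a k = 0) ->
  Rayleigh (esym_comb a [set: 'I_n] 0) <-> pf2_seq a.
Proof.
move=> a0 a_n; split=> [[_ _ ray] | pf2a].
  have [n_small|n2] := ltnP n 2.
    apply/(pf2_seq_on a0 a_n).
    by split=> [k /andP[k0 kn] | i j k _ ij jk kn]; exfalso; lia.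
  pose i : 'I_n := Ordinal (ltnW n2); pose j : 'I_n := Ordinal n2.
  have ij : i != j by [].
  apply: (pf2_of_esym_val_lc (U := setT :\ i :\ j)) => // [y y0|k].
    by rewrite -subr_ge0 -rayleigh_diff_esym_comb //; apply: ray.
  by rewrite cards_setTD2 // => nk; apply: a_n; lia.
split=> [|m|i j ij y y0]; first exact: msetpoly_multiaffine.
  by apply: msetpoly_mcoeff_ge0 => g; case: ifP.
rewrite rayleigh_diff_esym_comb // subr_ge0.
by have [_ lc _] := pf2_esym_val (setT :\ i :\ j) pf2a y0; apply: lc.
Qed.

Lemma Zflat_spec_esym_comb (R : realFieldType) (E : finType) (omega : {set E} -> R)
    r ell :
  Zflat_spec omega r ell = esym_comb (rev_seq (fk omega) r) [set: 'I_ell] 0.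
Proof.
rewrite /Zflat_spec /esym_comb /msetpoly.
transitivity (\sum_(S : {set E}) \sum_(h : {set 'I_ell})
  (if (#|S| <= r)%N && (#|h| == r - #|S|)%N then omega S else 0) *: 'X_[mesym1 h]).
  apply: eq_bigr => S _; case: ifP => Sr /=; last first.
    by rewrite big1 // => h _; rewrite scale0r.
  rewrite mesymE scaler_sumr big_mkcond; apply: eq_bigr => h _ /=.
  by case: (_ == _); rewrite ?scale0r.
rewrite exchange_big; apply: eq_bigr => h _.
rewrite -scaler_suml subsetT addn0 /rev_seq /fk; congr (_ *: _).
case: leqP => hr; last first.
  by rewrite big1 // => S _; case: leqP => // Sr; case: eqP => //; lia.
rewrite [RHS]big_mkcond; apply: eq_bigr => S _; congr (if _ then _ else _).
by apply/andP/eqP => [[Sr /eqP hS] | hS]; [| split; [| apply/eqP]]; lia.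
Qed.

Theorem proposition4p14 (R : realType) (E : finType)
    (omega : {set E} -> R) (r s : nat) :
  (forall S, 0 <= omega S) ->
  (exists S, omega S != 0) ->
  (exists S, 0 < omega S /\ #|S| = r) ->
  (forall S, 0 < omega S -> (#|S| <= r)%N) ->
  (exists S, 0 < omega S /\ #|S| = s) ->
  (forall S, 0 < omega S -> (s <= #|S|)%N) ->
  (log_concave_on (fk omega) s r /\ no_internal_zeros_on (fk omega) s r)
  <-> Rayleigh (Zflat_spec omega r (r - s)).
Proof.
move=> omega0 _ _ omega_r [S0 [S0pos S0s]] omega_s.
have sr : (s <= r)%N by rewrite -S0s omega_r.
pose a := rev_seq (fk omega) r.
have a0 j : 0 <= a j by rewrite /a /rev_seq; case: ifP => // _; apply: sumr_ge0.
have a_gap j : (r - s < j)%N -> a j = 0.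
  rewrite /a /rev_seq /fk => sj; case: (leqP j r) => // jr; apply: big1 => S /eqP Sj.
  apply/eqP; rewrite eq_le omega0 andbT leNgt; apply/negP => /omega_s; lia.
rewrite Zflat_spec_esym_comb (esym_comb_RayleighP a0 a_gap) (pf2_seq_on a0 a_gap).
by rewrite -log_concave_on_rev // -no_internal_zeros_on_rev.
Qed.
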